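(* Let $M$ be a positive integer with $M\not\equiv0\bmod3$, $L$ a positive divisor of $M$ with $L^*>2$, and $\ell$ the number of prime factors of $L^*$. Then $J_0(L,M)=\frac16\Big(M\varphi(L^* )/L^*-\big(\tfrac{M}{3}\big)2^{\ell}\epsilon\Big)$, where $\big(\tfrac{M}{3}\big)$ is the Legendre symbol, and $\epsilon=1$ if $L^*$ has no prime factor congruent to $1\bmod3$, $\epsilon=0$ otherwise.
   Context: For a positive integer $n$, $n^*$ denotes the product of the distinct prime divisors of $n$, and $\varphi$ is Euler's totient function. For a positive integer $M$, a positive divisor $L$ of $M$ and an integer $k\ge0$, $J_k(L,M)=\sum_u u^k$, the sum over integers $u$ with $0<u<M/2$, $\gcd(u,L)=1$ and $u\equiv -M\bmod 3$. *)

From HB Require Import structures.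
From mathcomp Require Import all_boot all_order all_algebra.
Set Implicit Arguments. Unset Strict Implicit. Unset Printing Implicit Defensive.
Import Order.TTheory GRing.Theory Num.Theory.

Definition nstar (n : nat) : nat := \prod_(p <- primes n) p.

(* J_k(L,M) = sum of u^k over integers 0 < u < M/2 with gcd(u,L)=1 and
   u = -M mod 3.  (u < M/2 <-> 2u < M; u = -M mod 3 <-> 3 | u + M.) *)
Definition J (k L M : nat) : nat :=
  \sum_(1 <= u < M | [&& 2 * u < M, coprime u L & (u + M) %% 3 == 0]) u ^ k.

Definition legendre3 (M : nat) : int :=
  if M %% 3 == 1 then 1%R else if M %% 3 == 2 then (-1)%R else 0%R.

Definition eps3 (L : nat) : nat :=
  if has (fun p => p %% 3 == 1) (primes (nstar L)) then 0 else 1.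

From HB Require Import structures.
From mathcomp Require Import all_boot all_order all_algebra.
From mathcomp Require Import zify ring lra.
Import Order.TTheory GRing.Theory Num.Theory.

Set Implicit Arguments.
Unset Strict Implicit.
Unset Printing Implicit Defensive.

(* Let s be the list of primes of L, whose product is N = L^*.  Counting the
   u < M/2 with u = -M mod 3 that are prime to every p in s is a sieve: as
   p | M and 3 does not divide M, the multiples u = p v removed at p are
   counted by the same problem for M/p, so the count is an inclusion-exclusion
   over the divisors of N.  With no sieving the count is
   (M - (M/3) - 3 [M even]) / 6 (look at M mod 6).  The first two terms are
   multiplicative in M and give M phi(N)/N and (M/3) prod_p (1 - (p/3)) =
   (M/3) 2^l eps, while the parity term cancels out as soon as s contains an
   odd prime, which N > 2 guarantees. *)

Definition count_mod3 (n c : nat) : nat := \sum_(u <- iota 0 n | 3 %| u + c) 1.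

Lemma count_mod3_add3 n c : count_mod3 (n + 3) c = count_mod3 n c + 1.
Proof.
rewrite /count_mod3 iotaD big_cat /= add0n !big_cons big_nil /=.
by congr (_ + _); repeat case: ifP => ?; lia.
Qed.

Lemma count_mod3_addmul3 k t c : count_mod3 (3 * k + t) c = k + count_mod3 t c.
Proof.
elim: k => [|k IHk]; first by rewrite muln0.
by rewrite (_ : 3 * k.+1 + t = 3 * k + t + 3) ?count_mod3_add3 ?IHk; lia.
Qed.

Lemma count_mod3_modr n c : count_mod3 n c = count_mod3 n (c %% 3).
Proof. by apply: eq_bigl => u; rewrite /dvdn modnDmr. Qed.

Lemma uphalf_addmul6 k r : uphalf (6 * k + r) = 3 * k + uphalf r.
Proof.
by rewrite !uphalf_half oddD oddM /= (_ : 6 * k = (3 * k).*2) ?halfD ?doubleK; lia.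
Qed.

Definition Jsieve (s : seq nat) (M : nat) : nat :=
  \sum_(u <- iota 0 M | [&& 2 * u < M, all (fun p => ~~ (p %| u)) s & 3 %| u + M]) 1.

Lemma Jsieve_nil m : Jsieve [::] m = count_mod3 (uphalf m) m.
Proof.
rewrite /Jsieve (eq_bigl (fun u => (u < 0 + uphalf m) && (3 %| u + m))) => [|u].
  rewrite -big_filter_cond filter_iota_ltn //.
  by rewrite -{2}[m]add0n leq_uphalf_double -addnn leq_addl.
by rewrite add0n gtn_uphalf_double -mul2n.
Qed.

Lemma filter_dvdn_iota p m : 0 < p ->
  filter (dvdn p) (iota 0 (p * m)) = map (muln p) (iota 0 m).
Proof.
move=> p_gt0; elim: m => [|m IHm]; first by rewrite muln0.
rewrite mulnS addnC iotaD filter_cat IHm -addn1 iotaD map_cat add0n /=.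
congr (_ ++ _); case: p p_gt0 {IHm} => // p _.
rewrite /= dvdn_mulr // (eq_in_filter (a2 := pred0)) ?filter_pred0 // => x.
rewrite mem_iota => /andP[x_ge x_lt]; apply/negP => /dvdnP[q x_eq]; subst x.
by have [q_le|q_gt] := leqP q m; nia.
Qed.

Lemma Jsieve_cons p s m : 0 < p -> all (coprime p) s -> ~~ (3 %| p * m) ->
  Jsieve s (p * m) = Jsieve (p :: s) (p * m) + Jsieve s m.
Proof.
move=> p_gt0 ps p3m.
rewrite /Jsieve (bigID (dvdn p)) /= addnC; congr (_ + _).
  by apply: eq_bigl => u /=; case: (p %| u); rewrite /= ?andbF ?andbT.
rewrite (eq_bigl (fun u => (p %| u) && [&& 2 * u < p * m,
          all (fun q => ~~ (q %| u)) s & 3 %| u + p * m]));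
  last by move=> u; rewrite andbC.
rewrite -big_filter_cond filter_dvdn_iota // big_map; apply: eq_bigl => v.
have p3 : coprime 3 p by rewrite prime_coprime //; apply: contra p3m; apply: dvdn_mulr.
rewrite mulnCA ltn_pmul2l // -mulnDr Gauss_dvdr //; congr [&& _, _ & _].
by apply: eq_in_all => q qs /=; rewrite Gauss_dvdr // coprime_sym (allP ps).
Qed.

Local Open Scope ring_scope.

Lemma legendre3M a b : legendre3 (a * b) = legendre3 a * legendre3 b.
Proof.
rewrite /legendre3 -modnMm.
move: (ltn_pmod a (isT : (0 < 3)%N)) (ltn_pmod b (isT : (0 < 3)%N)).
by case: (a %% 3)%N => [|[|[|]]]; case: (b %% 3)%N => [|[|[|]]].
Qed.

Lemma sqr_legendre3 p : ~~ (3 %| p)%N -> legendre3 p ^+ 2 = 1.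
Proof.
rewrite /legendre3 /dvdn; move: (ltn_pmod p (isT : (0 < 3)%N)).
by case: (p %% 3)%N => [|[|[|]]].
Qed.

Lemma six_Jsieve_nil m : ~~ (3 %| m)%N ->
  6 * (Jsieve [::] m)%:R = m%:R - (legendre3 m)%:~R - 3 * (~~ odd m)%:R :> rat.
Proof.
move=> m3; rewrite Jsieve_nil.
have -> : m = (6 * (m %/ 6) + m %% 6)%N by rewrite mulnC -divn_eq.
rewrite uphalf_addmul6 count_mod3_addmul3 count_mod3_modr oddD oddM /legendre3.
have mod3E t : ((6 * (m %/ 6) + t) %% 3 = t %% 3)%N.
  by rewrite -modnDml (_ : 6 * _ = 3 * (2 * (m %/ 6)))%N ?modnMr //; lia.
rewrite !mod3E natrD natrD natrM.
have : (m %% 6 = 1 \/ m %% 6 = 2 \/ m %% 6 = 4 \/ m %% 6 = 5)%N by lia.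
by case=> [->|[->|[->|->]]]; rewrite /count_mod3 /= !big_cons ?big_nil /=; lra.
Qed.

(* Inclusion-exclusion over s of the parity term [m even] of the base count. *)
Fixpoint parity_sieve (s : seq nat) (m : nat) : rat :=
  if s is p :: s' then parity_sieve s' m - parity_sieve s' (m %/ p)
  else (~~ odd m)%:R.

Lemma six_Jsieve s m : uniq s -> all prime s -> (\prod_(p <- s) p %| m)%N ->
  ~~ (3 %| m)%N ->
  6 * (Jsieve s m)%:R = m%:R * \prod_(p <- s) (1 - p%:R^-1)
    - (legendre3 m)%:~R * \prod_(p <- s) (1 - (legendre3 p)%:~R)
    - 3 * parity_sieve s m.
Proof.
elim: s m => [|p s IHs] m; first by rewrite !big_nil !mulr1 => *; apply: six_Jsieve_nil.
rewrite big_cons /= => /andP[ps s_uniq] /andP[p_prime s_prime] psm m3.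
have p_gt0 := prime_gt0 p_prime.
have pm : (p %| m)%N by apply: dvdn_trans psm; apply: dvdn_mulr.
have sm : (\prod_(q <- s) q %| m)%N by apply: dvdn_trans psm; apply: dvdn_mull.
set m' := (m %/ p)%N; have m_eq : m = (p * m')%N by rewrite /m' mulnC divnK.
have sm' : (\prod_(q <- s) q %| m')%N by rewrite /m' dvdn_divRL // mulnC.
have m'3 : ~~ (3 %| m')%N by apply: contra m3; rewrite m_eq; apply: dvdn_mull.
have p3 : ~~ (3 %| p)%N by apply: contra m3; rewrite m_eq; apply: dvdn_mulr.
have p_coprime : all (coprime p) s.
  apply/allP => q qs; rewrite prime_coprime // dvdn_prime2 //; last exact: (allP s_prime).
  by apply: contraNneq ps => ->.
have Jm : (Jsieve (p :: s) m)%:R = (Jsieve s m)%:R - (Jsieve s m')%:R :> rat.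
  by rewrite m_eq (Jsieve_cons p_gt0 p_coprime) -?m_eq // natrD addrK.
rewrite Jm mulrBr (IHs m) // (IHs m') // !big_cons m_eq legendre3M natrM intrM.
have p_neq0 : p%:R != 0 :> rat by rewrite pnatr_eq0 -lt0n.
set l := (legendre3 p)%:~R; set a := (legendre3 m')%:~R.
set P := \prod_(q <- s) (1 - q%:R^-1); set Q := \prod_(q <- s) (1 - (legendre3 q)%:~R).
have lp2 : l ^+ 2 = 1 by rewrite /l -rmorphXn /= sqr_legendre3.
apply/eqP; rewrite -subr_eq0 (_ : _ - _ = (1 - l ^+ 2) * (a * Q)); last by field.
by rewrite lp2 subrr mul0r.
Qed.

Lemma parity_sieve_divn_odd s m p : odd p -> (p * \prod_(q <- s) q %| m)%N ->
  parity_sieve s (m %/ p) = parity_sieve s m.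
Proof.
elim: s m => [|q s IHs] m p_odd; rewrite ?big_nil ?big_cons ?muln1 /= => psm.
  by rewrite -[in RHS](divnK psm) oddM p_odd andbT.
have qm : (q %| m)%N by apply: dvdn_trans psm; rewrite mulnCA dvdn_mulr.
have psm' : (p * \prod_(r <- s) r %| m %/ q)%N.
  by rewrite dvdn_divRL // -mulnA (mulnC _ q).
have psm'' : (p * \prod_(r <- s) r %| m)%N.
  by apply: dvdn_trans psm; rewrite mulnCA dvdn_mull.
by rewrite divnAC (IHs m) // (IHs (m %/ q)%N).
Qed.

Lemma parity_sieve_eq0 s m p : odd p -> p \in s -> (\prod_(q <- s) q %| m)%N ->
  parity_sieve s m = 0.
Proof.
elim: s m => [|q s IHs] m p_odd //; rewrite inE big_cons /= => /predU1P[<-|ps] psm.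
  by rewrite parity_sieve_divn_odd // subrr.
have sm : (\prod_(r <- s) r %| m)%N by apply: dvdn_trans psm; apply: dvdn_mull.
have qm : (q %| m)%N by apply: dvdn_trans psm; apply: dvdn_mulr.
by rewrite (IHs m) // (IHs (m %/ q)%N) ?subrr // dvdn_divRL // mulnC.
Qed.

Lemma prod_one_sub_invn (R : numFieldType) s : all (fun p => 0 < p)%N s ->
  \prod_(p <- s) (1 - p%:R^-1) =
    (\prod_(p <- s) p.-1)%N%:R / (\prod_(p <- s) p)%N%:R :> R.
Proof.
elim: s => [|p s IHs] /=; first by rewrite !big_nil divr1.
case/andP=> p_gt0 s_gt0; rewrite !big_cons IHs // !natrM -subn1 natrB //.
have s_neq0 : (\prod_(q <- s) q)%N%:R != 0 :> R.
  by rewrite pnatr_eq0 -lt0n big_seq prodn_cond_gt0 // => q /(allP s_gt0).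
by field; rewrite s_neq0 pnatr_eq0 -lt0n p_gt0.
Qed.

Lemma prod_one_sub_legendre3 (R : pzRingType) s : all (fun p => ~~ (3 %| p))%N s ->
  \prod_(p <- s) (1 - (legendre3 p)%:~R) =
    (2 ^ size s)%N%:R * (if has (fun p => p %% 3 == 1)%N s then 0 else 1)%N%:R :> R.
Proof.
elim: s => [|p s IHs] /=; first by rewrite big_nil mulr1.
case/andP=> p3 s3; rewrite big_cons IHs // /legendre3.
move: p3; rewrite /dvdn; move: (ltn_pmod p (isT : (0 < 3)%N)).
case: (p %% 3)%N => [|[|[|]]] //= _ _; first by rewrite subrr mul0r mulr0.
by rewrite opprK expnS natrM mulrA.
Qed.

Lemma dvdn_prod_primes s q : all prime s -> prime q ->
  (q %| \prod_(p <- s) p)%N = (q \in s).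
Proof.
move=> s_prime q_prime; rewrite Euclid_dvd_prod // big_has.
apply/hasP/idP => [[p ps]|qs]; last by exists q.
by rewrite dvdn_prime2 ?(allP s_prime p ps) // => /eqP->.
Qed.

Lemma totient_prod_primes s : uniq s -> all prime s ->
  totient (\prod_(p <- s) p) = (\prod_(p <- s) p.-1)%N.
Proof.
elim: s => [|p s IHs] /=; first by rewrite !big_nil.
case/andP=> ps s_uniq /andP[p_prime s_prime].
rewrite !big_cons totient_coprime ?(totient_prime p_prime) ?IHs //.
by rewrite prime_coprime // dvdn_prod_primes.
Qed.

Lemma nstar_dvdn n : (nstar n %| n)%N.
Proof.
have [->|n_gt0] := posnP n; first exact: dvdn0.
rewrite {2}(prod_prime_decomp n_gt0) /nstar /primes big_map !big_seq.
elim/big_ind2: _ => // [a b c d|[p e] /mem_prime_decomp[_ e_gt0 _]].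
  exact: dvdn_mul.
by rewrite -{1}(expn1 p) dvdn_exp2l.
Qed.

Lemma primes_nstar n : primes (nstar n) = primes n.
Proof.
have [->|n_gt0] := posnP n; first by rewrite /nstar big_nil.
have s_prime : all prime (primes n) by apply/allP => p; rewrite mem_primes => /andP[].
apply/eq_primes => q; rewrite !mem_primes /nstar n_gt0 big_seq prodn_cond_gt0 /=;
  last by move=> p /(allP s_prime)/prime_gt0.
rewrite -big_seq; case: (boolP (prime q)) => //= q_prime.
by rewrite dvdn_prod_primes // mem_primes q_prime n_gt0.
Qed.

Lemma has_odd_prod_primes_gt2 s : uniq s -> all prime s -> (2 < \prod_(p <- s) p)%N ->
  has odd s.
Proof.
move=> s_uniq s_prime; apply: contraTT; rewrite -all_predC => s_even.
have s_sub2 : {subset s <= [:: 2%N]}.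
  move=> p ps; rewrite inE; apply/eqP/prime_oddPn; first exact: (allP s_prime).
  exact: (allP s_even).
have := uniq_leq_size s_uniq s_sub2.
case: s s_sub2 {s_uniq s_prime s_even} => [|p [|q s]] s_sub2 //= _.
  by rewrite big_nil.
have := s_sub2 p (mem_head p [::]); rewrite inE => /eqP->.
by rewrite big_seq1.
Qed.

Lemma J0_Jsieve L M : (0 < L)%N -> ~~ (3 %| M)%N -> J 0 L M = Jsieve (primes L) M.
Proof.
move=> L_gt0; case: M => // M M3.
rewrite /J /Jsieve /index_iota subn1 /= big_cons /= add0n (negbTE M3) andbF.
rewrite big_seq_cond [RHS]big_seq_cond; apply: eq_big => [u|u _]; last exact: expn0.
case: (boolP (u \in iota 1 M)) => //=; rewrite mem_iota => /andP[u_gt0 _].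
congr [&& _, _ & _]; rewrite coprime_has_primes // -all_predC.
apply: eq_in_all => p; rewrite mem_primes => /and3P[p_prime _ _] /=.
by rewrite mem_primes p_prime u_gt0.
Qed.

Theorem propositionA4 (M L : nat) :
  (0 < M)%N -> ~~ (3 %| M)%N -> (0 < L)%N -> (L %| M)%N -> (2 < nstar L)%N ->
  ((J 0 L M)%:R : rat) =
    (1 / 6) * ((M * totient (nstar L))%:R / (nstar L)%:R
               - (legendre3 M)%:~R * (2 ^ size (primes (nstar L)))%:R * (eps3 L)%:R).
Proof.
(* [0 < M] already follows from [~~ (3 %| M)]. *)
move=> _ M3 L_gt0 LM L2.
set s := primes L.
have s_uniq : uniq s := primes_uniq L.
have s_prime : all prime s by apply/allP => p; rewrite mem_primes => /andP[].
have sM : (\prod_(p <- s) p %| M)%N := dvdn_trans (nstar_dvdn L) LM.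
have s3 : all (fun p => ~~ (3 %| p))%N s.
  apply/allP => p ps; apply: contra M3 => /dvdn_trans; apply; apply: dvdn_trans sM.
  by rewrite dvdn_prod_primes // (allP s_prime).
have [p ps p_odd] := hasP (has_odd_prod_primes_gt2 s_uniq s_prime L2).
have := six_Jsieve s_uniq s_prime sM M3.
rewrite (parity_sieve_eq0 p_odd ps sM) mulr0 subr0 prod_one_sub_invn; last first.
  by apply: sub_all s_prime => q /prime_gt0.
rewrite prod_one_sub_legendre3 // !mulrA => M_sieve.
rewrite J0_Jsieve // /eps3 primes_nstar /nstar totient_prod_primes // natrM -M_sieve.
by field.
Qed.
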